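(* For every spine grammar $\mathcal G$ there is a normalized spine grammar $\mathcal G'$ with $T(\mathcal G')=T(\mathcal G)$.
   Context: sCFTG: $\mathcal G=(N,\Sigma,S,P)$ with disjoint ranked alphabets $N=N_0\cup N_1$ (nullary/unary nonterminals) and $\Sigma=\Sigma_0\cup\Sigma_2$ (no unary terminals), start $S\in N_0$, finite productions $n\to r$ with $n\in N_0$ and $r$ a tree with inner nodes in $\Sigma_2\cup N_1$ (rank 2 resp. 1) and leaves in $N_0\cup\Sigma_0$, or $n\to C$ with $n\in N_1$ and $C$ such a tree additionally containing exactly one leaf $\Box$. A step replaces an occurrence of $n\in N_0$ by $r$, or a subtree $n(t')$ with $n\in N_1$ by $C$ with $\Box$ replaced by $t'$. $T(\mathcal G)$ is the set of trees over $\Sigma$ derivable from $S$. Spine grammar: an sCFTG with a map $d:\Sigma_2\to\{1,2\}$ such that for every production $n\to C$ with $n\in N_1$ and every position $w$ on the path from the root of $C$ to $\Box$ with $C(w)\in\Sigma_2$, the path continues to child $d(C(w))$ of $w$. Normal form: every production has one of the forms (i) start: $n\to b(\alpha)$ or $n\to\alpha$ with $b\in N_1$, $\alpha\in\Sigma_0$; (ii) chain: $n\to b_1(b_2(\Box))$ with $b_1,b_2\in N_1$; (iii) terminal: $n\to\sigma(\Box,a)$ or $n\to\sigma(a,\Box)$ with $\sigma\in\Sigma_2$, $a\in N_0\setminus\{S\}$. For $n\in N_0$, the spinal trees $I_{\mathcal G}(n)$ are the trees $t$ (over $\Sigma_2$, leaves in $\Sigma_0\cup N_0$) obtained from $n$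 by one derivation step of $\mathcal G$ followed by any number of steps using only productions with left-hand side in $N_1$. $\mathcal G$ is normalized if it is in normal form and for every $n\in N_0$ no tree of $I_{\mathcal G}(n)$ contains $n$. *)

From mathcomp Require Import all_boot.
From Stdlib Require Import List Relations.
Set Implicit Arguments.
Unset Strict Implicit.
Unset Printing Implicit Defensive.

(* Disjointness of the alphabets is given by the separate types. *)
Inductive tree (N0 N1 S0 S2 : Type) : Type :=
| tN0 : N0 -> tree N0 N1 S0 S2
| tS0 : S0 -> tree N0 N1 S0 S2
| tN1 : N1 -> tree N0 N1 S0 S2 -> tree N0 N1 S0 S2
| tS2 : S2 -> tree N0 N1 S0 S2 -> tree N0 N1 S0 S2 -> tree N0 N1 S0 S2
| tBox : tree N0 N1 S0 S2.
Arguments tN0 {N0 N1 S0 S2}.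
Arguments tS0 {N0 N1 S0 S2}.
Arguments tN1 {N0 N1 S0 S2}.
Arguments tS2 {N0 N1 S0 S2}.
Arguments tBox {N0 N1 S0 S2}.

Inductive ttree (S0 S2 : Type) : Type :=
| TLeaf : S0 -> ttree S0 S2
| TBin : S2 -> ttree S0 S2 -> ttree S0 S2 -> ttree S0 S2.
Arguments TLeaf {S0 S2}.
Arguments TBin {S0 S2}.

Section Grammars.
Variables (N0 N1 S0 S2 : Type).
Notation tr := (tree N0 N1 S0 S2).

Fixpoint emb (u : ttree S0 S2) : tr :=
  match u with
  | TLeaf a => tS0 a
  | TBin s l r => tS2 s (emb l) (emb r)
  end.

Fixpoint nbox (t : tr) : nat :=
  match t with
  | tBox => 1
  | tN0 _ | tS0 _ => 0
  | tN1 _ t => nbox t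
  | tS2 _ l r => nbox l + nbox r
  end.

Fixpoint fill (C t : tr) : tr :=
  match C with
  | tBox => t
  | tN0 n => tN0 n
  | tS0 a => tS0 a
  | tN1 b C' => tN1 b (fill C' t)
  | tS2 s l r => tS2 s (fill l t) (fill r t)
  end.

Record sCFTG := {
  start : N0;
  prods0 : list (N0 * tr);
  prods1 : list (N1 * tr) }.

Definition wf_sCFTG (G : sCFTG) : Prop :=
  (forall n r, In (n, r) (prods0 G) -> nbox r = 0) /\
  (forall n C, In (n, C) (prods1 G) -> nbox C = 1).

Inductive step_gen (G : sCFTG) (only1 : bool) : tr -> tr -> Prop :=
| st_N0 : forall n r, only1 = false -> In (n, r) (prods0 G) ->
    step_gen G only1 (tN0 n) r
| st_N1 : forall n C t, In (n, C) (prods1 G) ->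
    step_gen G only1 (tN1 n t) (fill C t)
| st_un : forall b t t', step_gen G only1 t t' ->
    step_gen G only1 (tN1 b t) (tN1 b t')
| st_binl : forall s l l' r, step_gen G only1 l l' ->
    step_gen G only1 (tS2 s l r) (tS2 s l' r)
| st_binr : forall s l r r', step_gen G only1 r r' ->
    step_gen G only1 (tS2 s l r) (tS2 s l r').

Definition step (G : sCFTG) := step_gen G false.
Definition step1 (G : sCFTG) := step_gen G true.

Definition lang (G : sCFTG) (u : ttree S0 S2) : Prop :=
  clos_refl_trans tr (step G) (tN0 (start G)) (emb u).

Inductive dir := D1 | D2.

Fixpoint spine_path (d : S2 -> dir) (C : tr) : Prop :=
  match C with
  | tBox => True
  | tN0 _ | tS0 _ => False
  | tN1 _ C' => spine_path d C'
  | tS2 s l r => match d s with D1 => spine_path d l | D2 => spine_path d r end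
  end.

Definition spine_grammar (G : sCFTG) (d : S2 -> dir) : Prop :=
  wf_sCFTG G /\ forall n C, In (n, C) (prods1 G) -> spine_path d C.

Definition normal_form (G : sCFTG) : Prop :=
  (forall n r, In (n, r) (prods0 G) ->
     (exists b a, r = tN1 b (tS0 a)) \/ (exists a, r = tS0 a)) /\
  (forall n C, In (n, C) (prods1 G) ->
     (exists b1 b2, C = tN1 b1 (tN1 b2 tBox)) \/
     (exists s a, a <> start G /\ (C = tS2 s tBox (tN0 a) \/ C = tS2 s (tN0 a) tBox))).

Fixpoint spinal_shape (t : tr) : Prop :=
  match t with
  | tN0 _ | tS0 _ => True
  | tN1 _ _ | tBox => False
  | tS2 _ l r => spinal_shape l /\ spinal_shape r
  end.

Fixpoint containsN0 (n : N0) (t : tr) : Prop :=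
  match t with
  | tN0 m => m = n
  | tS0 _ | tBox => False
  | tN1 _ t' => containsN0 n t'
  | tS2 _ l r => containsN0 n l \/ containsN0 n r
  end.

Definition spinal_trees (G : sCFTG) (n : N0) (t : tr) : Prop :=
  spinal_shape t /\
  exists t1, step G (tN0 n) t1 /\ clos_refl_trans tr (step1 G) t1 t.

Definition normalized (G : sCFTG) : Prop :=
  normal_form G /\ forall n t, spinal_trees G n t -> ~ containsN0 n t.

End Grammars.

(* Following [d] from the root, every tree over
   Σ, possibly with a hole, reads as [plug w e]: a spine word [w] listing each
   terminal on the spine with the subtree hanging off it, ended by a leaf [e].
   For each of the finitely many subtrees [t] of the grammar and each end [e],
   the words [w] such that [t] derives [plug w e] form a spine language
   [L(t, e)]; so do the one-letter sets [σ L(t)] of words [(σ, v)] with [t]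
   deriving [v].  By induction on derivations, every word of length at least
   two in [L(t, e)] is a product of two nonempty words from spine languages
   [K1], [K2] with [K1 K2 ⊆ L(t, e)], and every one-letter word lies in some
   [σ L(a) ⊆ L(t, e)].  Hence the grammar whose unary nonterminals are the
   spine languages and whose productions are all normal-form rules sound for
   them ([s -> s1 s2] for [s1 s2 ⊆ s], [s -> σ(□, a)] or its mirror for
   [σ L(a) ⊆ s], and start rules) generates exactly [T(G)], by induction on
   tree size and word length.  A parity bit on the nonterminals, flipped at
   every terminal rule, keeps each nullary nonterminal out of its own spinal
   trees. *)

From Stdlib Require Import List Relations ClassicalEpsilon Lia.
From mathcomp Require Import all_boot zify.
Set Implicit Arguments.
Unset Strict Implicit.
Unset Printing Implicit Defensive.

Section Derivations.
Variables (N0 N1 S0 S2 : Type) (G : sCFTG N0 N1 S0 S2).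
Notation tr := (tree N0 N1 S0 S2).
Notation htree := (ttree (option S0) S2).
Implicit Types (C t l r : tr) (u v : htree).

Lemma fillA C1 C2 t : fill (fill C1 C2) t = fill C1 (fill C2 t).
Proof. by elim: C1 => //= [b C ->|s l -> r ->]. Qed.

Lemma fill_tBox C : fill C tBox = C.
Proof. by elim: C => //= [b C ->|s l -> r ->]. Qed.

Lemma fill_nbox0 C t : nbox C = 0 -> fill C t = C.
Proof. elim: C => //= [b C IH|s l IHl r IHr] H; rewrite ?IH ?IHl ?IHr //; lia. Qed.

Lemma nbox_fill C t : nbox (fill C t) = nbox C * nbox t.
Proof. elim: C => /= [n|a|b C ->|s l -> r ->|]; lia. Qed.

(* Big-step derivations of height at most [h], from a tree with holes to a
   terminal tree in which [TLeaf None] marks a hole. *)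
Fixpoint derivesn (h : nat) t u {struct h} : Prop :=
  match t, h with
  | tS0 a, _ => u = TLeaf (Some a)
  | tBox, _ => u = TLeaf None
  | tN0 n, h.+1 => exists2 r, In (n, r) (prods0 G) & derivesn h r u
  | tN1 b t, h.+1 => exists2 C, In (b, C) (prods1 G) & derivesn h (fill C t) u
  | tS2 s l r, h.+1 =>
      exists ul ur, [/\ u = TBin s ul ur, derivesn h l ul & derivesn h r ur]
  | _, 0 => False
  end.

Definition derives t u := exists h, derivesn h t u.

Lemma derivesn_mono h h' t u : h <= h' -> derivesn h t u -> derivesn h' t u.
Proof.
elim: h h' t u => [|h IH] h' [n|a|b t|s l r|] u //=; case: h' => [|h'] //= Hh.
- by move=> [r Hr /(IH h' _ _ Hh)]; exists r.
- by move=> [C HC /(IH h' _ _ Hh)]; exists C.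
- by move=> [ul [ur [-> /(IH h' _ _ Hh) Hl /(IH h' _ _ Hh) Hr]]]; exists ul, ur.
Qed.

Lemma derives_bin s l r ul ur :
  derives l ul -> derives r ur -> derives (tS2 s l r) (TBin s ul ur).
Proof.
move=> [h1 H1] [h2 H2]; exists (maxn h1 h2).+1, ul, ur.
split => //; [apply: derivesn_mono H1|apply: derivesn_mono H2]; lia.
Qed.

Lemma derives_prod0 n r u : In (n, r) (prods0 G) -> derives r u -> derives (tN0 n) u.
Proof. by move=> Hr [h H]; exists h.+1, r. Qed.

Lemma derives_prod1 b C t u :
  In (b, C) (prods1 G) -> derives (fill C t) u -> derives (tN1 b t) u.
Proof. by move=> HC [h H]; exists h.+1, C. Qed.

Lemma derives_fill_mono t t' :
  (forall u, derives t' u -> derives t u) ->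
  forall D u, derives (fill D t') u -> derives (fill D t) u.
Proof.
move=> Htt' D u [h]; elim: h D u => [|h IH] [n|a|b D|s l r|] u //=; try by exists 0.
- by move=> Ht'; apply: Htt'; exists 0.
- by move=> Hn; exists h.+1.
- move=> [C HC]; rewrite -fillA => /IH; rewrite fillA; exact: derives_prod1.
- by move=> [ul [ur [-> /IH Hl /IH Hr]]]; apply: derives_bin.
- by move=> Ht'; apply: Htt'; exists h.+1.
Qed.

Lemma step_derives t t' u : step G t t' -> derives t' u -> derives t u.
Proof.
move=> Hstep; elim: Hstep u => {t t'}
  [n r _ Hr|b C t HC|b t t' _ IH|s l l' r _ IH|s l r r' _ IH] u.
- exact: derives_prod0.
- exact: derives_prod1.
- move=> [[|h] //= [C HC HCt']]; apply: derives_prod1 HC _.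
  by apply: (derives_fill_mono IH); exists h.
- move=> [[|h] //= [ul [ur [-> Hl Hr]]]].
  by apply: derives_bin; [apply: IH|]; exists h.
- move=> [[|h] //= [ul [ur [-> Hl Hr]]]].
  by apply: derives_bin; [|apply: IH]; exists h.
Qed.

Fixpoint hole_tree (u : htree) : tr :=
  match u with
  | TLeaf (Some a) => tS0 a
  | TLeaf None => tBox
  | TBin s l r => tS2 s (hole_tree l) (hole_tree r)
  end.

Fixpoint lift_tree (u : ttree S0 S2) : htree :=
  match u with
  | TLeaf a => TLeaf (Some a)
  | TBin s l r => TBin s (lift_tree l) (lift_tree r)
  end.

Lemma hole_tree_lift (u : ttree S0 S2) : hole_tree (lift_tree u) = emb N0 N1 u.
Proof. by elim: u => //= s l -> r ->. Qed.

Lemma derives_emb (u : ttree S0 S2) : derives (emb N0 N1 u) (lift_tree u).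
Proof. elim: u => [a|s l IHl r IHr] /=; [by exists 0|exact: derives_bin]. Qed.

Lemma steps_congr (f : tr -> tr) t t' :
  (forall x y, step G x y -> step G (f x) (f y)) ->
  clos_refl_trans tr (step G) t t' -> clos_refl_trans tr (step G) (f t) (f t').
Proof.
move=> Hf; elim=> [x y /Hf|x|x y z _ IH1 _ IH2];
  [exact: rt_step|exact: rt_refl|exact: rt_trans IH1 IH2].
Qed.

Lemma steps_bin s l l' r r' :
  clos_refl_trans tr (step G) l l' -> clos_refl_trans tr (step G) r r' ->
  clos_refl_trans tr (step G) (tS2 s l r) (tS2 s l' r').
Proof.
move=> Hl Hr; apply: (@rt_trans _ _ _ (tS2 s l' r)).
- by apply: (steps_congr (f := fun x => tS2 s x r) _ Hl) => x y; constructor.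
- by apply: (steps_congr (f := tS2 s l') _ Hr) => x y; constructor.
Qed.

Lemma derivesn_steps h t u : derivesn h t u -> clos_refl_trans tr (step G) t (hole_tree u).
Proof.
elim: h t u => [|h IH] [n|a|b t|s l r|] u //=; try by move=> ->; apply: rt_refl.
- by move=> [r Hr /IH]; apply: rt_trans; apply: rt_step; constructor.
- by move=> [C HC /IH]; apply: rt_trans; apply: rt_step; constructor.
- by move=> [ul [ur [-> /IH Hl /IH Hr]]]; apply: steps_bin.
Qed.

Lemma lang_derives (u : ttree S0 S2) : lang G u <-> derives (tN0 (start G)) (lift_tree u).
Proof.
split=> [|[h /derivesn_steps]]; last by rewrite hole_tree_lift.
rewrite /lang => /clos_rt_rt1n_iff Hsteps; move: (derives_emb u).
by elim: Hsteps => // x y z Hxy _ IH /IH; apply: step_derives Hxy.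
Qed.

End Derivations.

Section Spines.
Variables (S0 S2 : Type) (d : S2 -> dir).
Notation htree := (ttree (option S0) S2).
Notation word := (seq (S2 * htree)).
Implicit Types (u v x : htree) (w : word).

(* A letter [(s, x)] is a node [s] whose child chosen by [d s] continues the
   spine and whose other child is [x]. *)
Fixpoint plug w v : htree :=
  match w with
  | [::] => v
  | (s, x) :: w =>
      match d s with D1 => TBin s (plug w v) x | D2 => TBin s x (plug w v) end
  end.

Lemma plug_cat w1 w2 v : plug (w1 ++ w2) v = plug w1 (plug w2 v).
Proof. by elim: w1 => [|[s x] w IH] //=; rewrite IH. Qed.

Lemma plug_eq_leaf w e a : plug w (TLeaf e) = TLeaf a -> w = [::].
Proof. by case: w => [|[s x] w] //=; case: (d s). Qed.

Lemma plug_eq_bin w e s ul ur : plug w (TLeaf e) = TBin s ul ur ->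
  exists x w', w = (s, x) :: w' /\
    match d s with
    | D1 => ul = plug w' (TLeaf e) /\ ur = x
    | D2 => ul = x /\ ur = plug w' (TLeaf e)
    end.
Proof.
case: w => [|[s' x] w] //=.
by case Es: (d s') => -[<- <- <-]; exists x, w; rewrite Es.
Qed.

Lemma plug_prefix w1 v w e : plug w1 v = plug w (TLeaf e) ->
  exists2 w2, w = w1 ++ w2 & v = plug w2 (TLeaf e).
Proof.
elim: w1 w => [|[s x] w1 IH] w /=; first by move->; exists w.
case: w => [|[s' x'] w] /=; first by case: (d s).
case Es: (d s); case Es': (d s') => -[Ess']; subst s'; rewrite Es in Es' => //.
- by move=> /IH [w2 -> ->] <-; exists w2.
- by move=> <- /IH [w2 -> ->]; exists w2.
Qed.

Lemma spine_decomposition u : exists w e, u = plug w (TLeaf e).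
Proof.
elim: u => [e|s l [wl [el ->]] r [wr [er ->]]]; first by exists [::], e.
case Es: (d s).
- by exists ((s, plug wr (TLeaf er)) :: wl), el; rewrite /= Es.
- by exists ((s, plug wl (TLeaf el)) :: wr), er; rewrite /= Es.
Qed.

Fixpoint hole_free u : Prop :=
  match u with
  | TLeaf e => e <> None
  | TBin _ l r => hole_free l /\ hole_free r
  end.

Fixpoint tsize u : nat :=
  match u with
  | TLeaf _ => 1
  | TBin _ l r => (tsize l + tsize r).+1
  end.

Lemma hole_free_lift (u : ttree S0 S2) : hole_free (lift_tree u).
Proof. by elim: u => //= s l ? r ?; split. Qed.

Lemma hole_free_plug w v : hole_free (plug w v) -> hole_free v /\
  forall s x, In (s, x) w -> hole_free x /\ tsize x < tsize (plug w v).
Proof.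
elim: w => [|[s x] w IH] //=.
have Hletter (Hw : hole_free (plug w v)) (Hx : hole_free x) :
    hole_free v /\ forall s' x', (s, x) = (s', x') \/ In (s', x') w ->
      hole_free x' /\ tsize x' < (tsize (plug w v) + tsize x).+1.
  have [Hv Hsides] := IH Hw; split => // s' x' [[_ <-]|/Hsides [? ?]]; split => //; lia.
case: (d s) => /= -[H1 H2]; first exact: Hletter.
have [Hv Hsides] := Hletter H2 H1; split => // s' x' /Hsides [? ?]; split => //; lia.
Qed.

End Spines.

Section SpineGrammars.
Variables (N0 N1 S0 S2 : Type) (G : sCFTG N0 N1 S0 S2) (d : S2 -> dir).
Notation tr := (tree N0 N1 S0 S2).
Notation htree := (ttree (option S0) S2).
Notation word := (seq (S2 * htree)).
Notation derivesn := (derivesn G).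
Notation derives := (derives G).
Notation plug := (plug d).
Implicit Types (C t l r : tr) (u v x : htree) (w : word).

Definition spine_context C := nbox C = 1 /\ spine_path d C.

Hypothesis prods1_spine_context : forall b C, In (b, C) (prods1 G) -> spine_context C.

Lemma spine_path_nbox_gt0 C : spine_path d C -> 0 < nbox C.
Proof.
elim: C => //= s l IHl r IHr; case: (d s) => [/IHl|/IHr]; lia.
Qed.

Lemma spine_context_fill C C' :
  spine_context C -> spine_context C' -> spine_context (fill C C').
Proof.
move=> [HC1 HCs] [HC'1 HC's]; split; first by rewrite nbox_fill HC1 HC'1.
by elim: C HCs {HC1} => //= s l IHl r IHr; case: (d s); auto.
Qed.

Lemma spine_context_bin s l r : spine_context (tS2 s l r) ->
  match d s with
  | D1 => spine_context l /\ nbox r = 0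
  | D2 => nbox l = 0 /\ spine_context r
  end.
Proof.
rewrite /spine_context /=; case: (d s) => -[H1 Hs]; have := spine_path_nbox_gt0 Hs => Hpos.
- by split; [split|] => //; lia.
- by split; [|split] => //; lia.
Qed.

Lemma derivesn_spine_fill_inv h C t u : spine_context C -> derivesn h (fill C t) u ->
  exists w v, [/\ derivesn h C (plug w (TLeaf None)), derivesn h t v & u = plug w v].
Proof.
elim: h C t u => [|h IH] [n|a|b C|s l r|] t u HC //=;
  try by case: HC; rewrite /spine_context /=.
- by move=> Ht; exists [::], u; split.
- move=> [C0 HC0]; rewrite -fillA.
  have HC0C := spine_context_fill (prods1_spine_context HC0) (HC : spine_context C).
  case/(IH _ _ _ HC0C)=> w [v [HC0Cw Ht ->]].
  exists w, v; split => //; [by exists C0|exact: derivesn_mono (leqnSn h) Ht].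
- move=> [ul [ur [-> Hl Hr]]]; move: (spine_context_bin HC).
  case Es: (d s) => -[Hsl Hsr].
  + rewrite (fill_nbox0 _ Hsr) in Hr; case: (IH _ _ _ Hsl Hl) => w [v [Hlw Ht ->]].
    exists ((s, ur) :: w), v; rewrite /= Es.
    by split => //; [exists (plug w (TLeaf None)), ur|exact: derivesn_mono (leqnSn h) Ht].
  + rewrite (fill_nbox0 _ Hsl) in Hl; case: (IH _ _ _ Hsr Hr) => w [v [Hrw Ht ->]].
    exists ((s, ul) :: w), v; rewrite /= Es.
    by split => //; [exists ul, (plug w (TLeaf None))|exact: derivesn_mono (leqnSn h) Ht].
- by move=> Ht; exists [::], u; split.
Qed.

Lemma derives_spine_fill C w t v : spine_context C ->
  derives C (plug w (TLeaf None)) -> derives t v -> derives (fill C t) (plug w v).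
Proof.
move=> HC [h HCw] Htv; elim: h C w HC HCw => [|h IH] [n|a|b C|s l r|] w HC //=;
  try by case: HC; rewrite /spine_context /=.
- by move/plug_eq_leaf->.
- move=> [C0 HC0 HC0C].
  have HC0C' := spine_context_fill (prods1_spine_context HC0) (HC : spine_context C).
  by apply: derives_prod1 HC0 _; rewrite -fillA; apply: IH HC0C.
- move=> [ul [ur [Hw Hl Hr]]]; have [x [w' [-> Hsides]]] := plug_eq_bin Hw.
  move: (spine_context_bin HC); rewrite /=; case: (d s) Hsides => -[Eul Eur] [Hsl Hsr]; subst ul ur.
  + by rewrite (fill_nbox0 _ Hsr); apply: derives_bin; [exact: IH|exists h].
  + by rewrite (fill_nbox0 _ Hsl); apply: derives_bin; [exists h|exact: IH].
- by move/plug_eq_leaf->.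
Qed.


(* [inl (t, e)] stands for [L(t, e)] and [inr (σ, t)] for [σ L(t)]. *)
Definition spine_lang := (tr * option S0 + S2 * tr)%type.

Definition spine_words (k : spine_lang) w : Prop :=
  match k with
  | inl (t, e) => derives t (plug w (TLeaf e))
  | inr (s, a) => exists2 v, w = [:: (s, v)] & derives a v
  end.

Variable P : tr -> Prop.
Hypothesis P_N1 : forall b t, P (tN1 b t) -> P t.
Hypothesis P_bin : forall s l r, P (tS2 s l r) -> P l /\ P r.
Hypothesis P_N1_hole : forall b, P (tN1 b tBox).
Hypothesis P_prods0 : forall n r, In (n, r) (prods0 G) -> P r.
Hypothesis P_prods1 : forall b C, In (b, C) (prods1 G) -> P C.

Definition spine_lang_over (k : spine_lang) : Prop :=
  match k with inl (t, _) => P t | inr (_, a) => P a end.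

Definition factorizable t e w : Prop :=
  (1 < size w -> exists k1 k2 w1 w2,
     [/\ w = w1 ++ w2, w1 <> [::], w2 <> [::],
         [/\ spine_lang_over k1, spine_lang_over k2, spine_words k1 w1 & spine_words k2 w2] &
         forall w1' w2', spine_words k1 w1' -> spine_words k2 w2' ->
           derives t (plug (w1' ++ w2') (TLeaf e))]) /\
  (forall s v, w = [:: (s, v)] -> exists a,
     [/\ P a, derives a v &
         forall v', derives a v' -> derives t (plug [:: (s, v')] (TLeaf e))]).

Lemma factorizable_sub t1 e1 t2 e2 w :
  (forall z, derives t1 (plug z (TLeaf e1)) -> derives t2 (plug z (TLeaf e2))) ->
  factorizable t1 e1 w -> factorizable t2 e2 w.
Proof.
move=> Hsub [Hsplit Hletter]; split.
- move=> /Hsplit [k1 [k2 [w1 [w2 [Ew Hw1 Hw2 Hk Hcat]]]]].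
  by exists k1, k2, w1, w2; split => // w1' w2' Hw1' Hw2'; apply/Hsub/Hcat.
- move=> s v /Hletter [a [Pa Hav Hsub_a]].
  by exists a; split => // v' /Hsub_a; apply: Hsub.
Qed.

Lemma factorizable_bin h s l r e w :
  P (tS2 s l r) -> derivesn h.+1 (tS2 s l r) (plug w (TLeaf e)) ->
  factorizable (tS2 s l r) e w.
Proof.
move=> /P_bin [Pl Pr] [ul [ur [Ew Hl Hr]]].
have [x [w' [-> Hsides]]] := plug_eq_bin Ew.
have [c [a [[Pc Pa] [Hc Ha] Hnode]]] : exists c a,
    [/\ P c /\ P a, derives c (plug w' (TLeaf e)) /\ derives a x &
        forall v z, derives a v -> derives c (plug z (TLeaf e)) ->
          derives (tS2 s l r) (plug ((s, v) :: z) (TLeaf e))].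
  case Es: (d s) Hsides => -[Eul Eur]; subst ul ur.
  - exists l, r; split=> // [|v z Hv Hz]; first by split; exists h.
    by rewrite /= Es; apply: derives_bin.
  - exists r, l; split=> // [|v z Hv Hz]; first by split; exists h.
    by rewrite /= Es; apply: derives_bin.
split=> [Hsize|s' v [<- <- Ew']].
- exists (inr (s, a)), (inl (c, e)), [:: (s, x)], w'; split => //.
  + by case: w' Hsize {Hc Hl Hr Hsides}.
  + by split => //; exists x.
  + by move=> _ w2' [v -> Hv] Hw2'; apply: Hnode.
- subst w'; exists a; split => // v' Hv'; exact: Hnode.
Qed.

Lemma derivesn_factorizable h t e w :
  P t -> derivesn h t (plug w (TLeaf e)) -> factorizable t e w.
Proof.
elim: h t e w => [|h IH] [n|a|b t|s l r|] e w Pt //=; try by move/plug_eq_leaf->.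
- move=> [r Hr Hrw]; apply: factorizable_sub (IH _ _ _ (P_prods0 Hr) Hrw).
  by move=> z; apply: derives_prod0.
- move=> [C HC HCt]; have HCc := prods1_spine_context HC.
  have [w1 [v [HCw1 Htv Ew]]] := derivesn_spine_fill_inv HCc HCt.
  have [w2 Ew2 Ev] := plug_prefix (esym Ew); subst w v; clear HCt Ew.
  have Fw1 := IH _ _ _ (P_prods1 HC) HCw1.
  have Fw2 := IH _ _ _ (P_N1 Pt) Htv.
  case: w1 HCw1 Fw1 => [|a1 w1] HCw1 Fw1.
    apply: factorizable_sub Fw2 => z Hz; apply: derives_prod1 HC _.
    exact: (derives_spine_fill (w := [::]) HCc (ex_intro _ h HCw1) Hz).
  case: w2 Htv Fw2 => [|a2 w2] Htv Fw2.
    rewrite cats0; apply: factorizable_sub Fw1 => z Hz; apply: derives_prod1 HC _.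
    exact: (derives_spine_fill HCc Hz (ex_intro _ h Htv)).
  split=> [_|s v /(f_equal size)]; last by rewrite /= size_cat addnS.
  exists (inl (tN1 b tBox, None)), (inl (t, e)), (a1 :: w1), (a2 :: w2); split => //.
    split; [exact: P_N1_hole|exact: P_N1 Pt| |by exists h].
    by apply: (derives_prod1 (t := tBox) HC); rewrite fill_tBox; exists h.
  move=> w1' w2' Hw1' Hw2'; rewrite plug_cat.
  exact: (derives_spine_fill (C := tN1 b tBox)) Hw1' Hw2'.
- exact: factorizable_bin.
Qed.
End SpineGrammars.

Lemma In_enum (T : finType) (x : T) : In x (enum T).
Proof.
have : x \in enum T := mem_enum T x.
by elim: (enum T) => //= y s IH; rewrite in_cons => /orP [/eqP ->|/IH]; auto.
Qed.

Definition classicb (P : Prop) : bool := is_left (excluded_middle_informative P).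

Lemma classicbP (P : Prop) : reflect P (classicb P).
Proof. by rewrite /classicb; case: excluded_middle_informative => H; constructor. Qed.

Section Normalization.
Variables (N0 N1 S0 S2 : finType) (G : sCFTG N0 N1 S0 S2) (d : S2 -> dir).
Hypothesis G_spine : spine_grammar G d.
Notation tr := (tree N0 N1 S0 S2).
Notation htree := (ttree (option S0) S2).
Notation word := (seq (S2 * htree)).
Implicit Types (C t l r : tr) (u v x : htree) (w : word).

Fixpoint subtrees t : list tr :=
  t :: match t with
       | tN1 _ t' => subtrees t'
       | tS2 _ l r => List.app (subtrees l) (subtrees r)
       | _ => nil
       end.

Lemma subtrees_refl t : In t (subtrees t).
Proof. by case: t => /=; auto. Qed.

Lemma subtrees_N1 b t y : In (tN1 b t) (subtrees y) -> In t (subtrees y).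
Proof.
elim: y => [n|a|b' y IH|s l IHl r IHr|] /=; try by intuition discriminate.
- by case=> [[_ <-]|/IH]; right; [exact: subtrees_refl|].
- by case=> [//|/in_app_iff [/IHl|/IHr]]; right; apply/in_app_iff; auto.
Qed.

Lemma subtrees_bin s l r y :
  In (tS2 s l r) (subtrees y) -> In l (subtrees y) /\ In r (subtrees y).
Proof.
elim: y => [n|a|b y IH|s' l' IHl r' IHr|] /=; try by intuition discriminate.
case=> [[_ <- <-]|/in_app_iff [/IHl [? ?]|/IHr [? ?]]].
- by split; right; apply/in_app_iff; [left|right]; exact: subtrees_refl.
- by split; right; apply/in_app_iff; left.
- by split; right; apply/in_app_iff; right.
Qed.

(* The contexts [b(□)] supply the languages [L(b(□), □)] used to split a word
   at a unary node. *)
Definition grammar_roots : list tr :=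
  tN0 (start G) :: List.map (fun b => tN1 b tBox) (enum N1) ++
    List.map snd (prods0 G) ++ List.map snd (prods1 G).

Definition grammar_trees : list tr := flat_map subtrees grammar_roots.

Definition grammar_tree t := In t grammar_trees.

Lemma grammar_tree_root y : In y grammar_roots -> grammar_tree y.
Proof. by move=> Hy; apply/in_flat_map; exists y; split => //; exact: subtrees_refl. Qed.

Lemma grammar_tree_N1 b t : grammar_tree (tN1 b t) -> grammar_tree t.
Proof. by move=> /in_flat_map [y [Hy /subtrees_N1 Ht]]; apply/in_flat_map; exists y. Qed.

Lemma grammar_tree_bin s l r : grammar_tree (tS2 s l r) -> grammar_tree l /\ grammar_tree r.
Proof.
by move=> /in_flat_map [y [Hy /subtrees_bin [Hl Hr]]]; split; apply/in_flat_map; exists y.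
Qed.

Lemma grammar_tree_start : grammar_tree (tN0 (start G)).
Proof. by apply: grammar_tree_root; left. Qed.

Lemma grammar_tree_N1_hole b : grammar_tree (tN1 b tBox).
Proof.
apply: grammar_tree_root; right; apply/in_app_iff; left.
by apply/in_map_iff; exists b; split => //; exact: In_enum.
Qed.

Lemma grammar_tree_prods0 n r : In (n, r) (prods0 G) -> grammar_tree r.
Proof.
move=> Hr; apply: grammar_tree_root; right; apply/in_app_iff; right.
by apply/in_app_iff; left; apply/in_map_iff; exists (n, r).
Qed.

Lemma grammar_tree_prods1 b C : In (b, C) (prods1 G) -> grammar_tree C.
Proof.
move=> HC; apply: grammar_tree_root; right; apply/in_app_iff; right.
by apply/in_app_iff; right; apply/in_map_iff; exists (b, C).
Qed.

Lemma prods1_spine_context b C : In (b, C) (prods1 G) -> spine_context d C.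
Proof. by case: G_spine => -[_ H1] H2 HC; split; [exact: H1 HC|exact: H2 HC]. Qed.

Notation Idx := 'I_(length grammar_trees).

Definition gtree (i : Idx) : tr := List.nth i grammar_trees tBox.

Lemma grammar_tree_gtree i : grammar_tree (gtree i).
Proof. by apply: nth_In; apply/ltP. Qed.

Lemma gtreeP t : grammar_tree t -> exists i : Idx, gtree i = t.
Proof. by move=> /(In_nth _ _ tBox) [n [/ltP Hn <-]]; exists (Ordinal Hn). Qed.

Notation Sym := ((Idx * option S0) + (S2 * Idx))%type.

Definition sym_lang (s : Sym) : spine_lang N0 N1 S0 S2 :=
  match s with
  | inl (i, e) => inl (gtree i, e)
  | inr (σ, i) => inr (σ, gtree i)
  end.

Definition sym_words (s : Sym) w := spine_words G d (sym_lang s) w.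

Lemma symP k : spine_lang_over grammar_tree k -> exists s : Sym, forall w,
  sym_words s w <-> spine_words G d k w.
Proof.
case: k => [[t e]|[σ t]] /= /gtreeP [i <-].
- by exists (inl (i, e)).
- by exists (inr (σ, i)).
Qed.

(* Nullary nonterminals are [None], a copy of the start symbol, and
   [Some (i, p)], standing for [gtree i]; unary ones are pairs [(s, p)] of a
   symbol and a parity bit [p]. *)
Notation N0n := (option (Idx * bool)).
Notation N1n := (Sym * bool)%type.
Notation trn := (tree N0n N1n S0 S2).

Definition nt_tree (X : N0n) : tr :=
  if X is Some (i, _) then gtree i else tN0 (start G).

Definition parity (X : N0n) : bool := if X is Some (_, p) then p else false.

Notation code0 := ((N0n * S0) * option Sym)%type.
Notation code1 := (N1n * ((Sym * Sym) + (S2 * Idx)))%type.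

Definition prod0_of (c : code0) : N0n * trn :=
  match c with
  | (X, α, None) => (X, tS0 α)
  | (X, α, Some s) => (X, tN1 (s, parity X) (tS0 α))
  end.

Definition sound0 (c : code0) : Prop :=
  match c with
  | (X, α, None) => derives G (nt_tree X) (TLeaf (Some α))
  | (X, α, Some s) =>
      forall w, sym_words s w -> derives G (nt_tree X) (plug d w (TLeaf (Some α)))
  end.

(* The parity flips at the nullary nonterminal hanging off a terminal
   production; this is what keeps [X] out of its own spinal trees. *)
Definition prod1_of (c : code1) : N1n * trn :=
  match c with
  | ((s, p), inl (s1, s2)) => ((s, p), tN1 (s1, p) (tN1 (s2, p) tBox))
  | ((s, p), inr (σ, a)) =>
      ((s, p), match d σ with
               | D1 => tS2 σ tBox (tN0 (Some (a, ~~ p)))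
               | D2 => tS2 σ (tN0 (Some (a, ~~ p))) tBox
               end)
  end.

Definition sound1 (c : code1) : Prop :=
  match c with
  | ((s, _), inl (s1, s2)) =>
      forall w1 w2, sym_words s1 w1 -> sym_words s2 w2 -> sym_words s (w1 ++ w2)
  | ((s, _), inr (σ, a)) => forall v, derives G (gtree a) v -> sym_words s [:: (σ, v)]
  end.

(* Every normal-form production that is sound for the languages named by its
   nonterminals; soundness is not decidable, so the selection is classical. *)
Definition Gn : sCFTG N0n N1n S0 S2 :=
  {| start := None;
     prods0 := List.map prod0_of
                 (List.filter (fun c => classicb (sound0 c)) (enum (code0 : finType)));
     prods1 := List.map prod1_of
                 (List.filter (fun c => classicb (sound1 c)) (enum (code1 : finType))) |}.

Lemma In_Gn_prods0 (q : N0n * trn) : In q (prods0 Gn) <-> exists2 c, sound0 c & prod0_of c = q.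
Proof.
rewrite /= in_map_iff; split=> [[c [<- /filter_In [_ /classicbP]]]|[c Hc <-]]; first by exists c.
by exists c; split => //; apply/filter_In; split; [exact: In_enum|apply/classicbP].
Qed.

Lemma In_Gn_prods1 (q : N1n * trn) : In q (prods1 Gn) <-> exists2 c, sound1 c & prod1_of c = q.
Proof.
rewrite /= in_map_iff; split=> [[c [<- /filter_In [_ /classicbP]]]|[c Hc <-]]; first by exists c.
by exists c; split => //; apply/filter_In; split; [exact: In_enum|apply/classicbP].
Qed.

Lemma Gn_spine : spine_grammar Gn d.
Proof.
split; first split.
- by move=> n r /In_Gn_prods0 [[[X α] [s|]] _ [_ <-]].
- by move=> b C /In_Gn_prods1 [[[s p] [[s1 s2]|[σ a]]] _ [_ <-]] //=; case: (d σ).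
- move=> b C /In_Gn_prods1 [[[s p] [[s1 s2]|[σ a]]] _ [_ <-]] //=.
  by case Eσ: (d σ); rewrite /= Eσ.
Qed.

Lemma Gn_normal_form : normal_form Gn.
Proof.
split.
- move=> n r /In_Gn_prods0 [[[X α] [s|]] _ [_ <-]]; first by left; exists (s, parity X), α.
  by right; exists α.
- move=> b C /In_Gn_prods1 [[[s p] [[s1 s2]|[σ a]]] _ [_ <-]].
    by left; exists (s1, p), (s2, p).
  by right; exists σ, (Some (a, ~~ p)); split => //; case: (d σ); auto.
Qed.

Fixpoint parity_inv (p : bool) (t : trn) : Prop :=
  match t with
  | tN0 X => exists a, X = Some (a, ~~ p)
  | tS0 _ | tBox => True
  | tN1 (_, q) t => q = p /\ parity_inv p t
  | tS2 _ l r => parity_inv p l /\ parity_inv p r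
  end.

Lemma parity_inv_step1 p (t t' : trn) : step1 Gn t t' -> parity_inv p t -> parity_inv p t'.
Proof.
elim=> {t t'} //= [[s q] C t /In_Gn_prods1 [[[s' p'] [[s1 s2]|[σ a]]] _ [_ <- <-]]|
                   [s q] t t' _ IH|s l l' r _ IH|s l r r' _ IH] /=.
- by move=> [<- Ht].
- by move=> [<- Ht]; case: (d σ) => /=; split=> //; exists a.
- by move=> [-> /IH].
- by move=> [/IH].
- by move=> [? /IH].
Qed.

Lemma parity_inv_contains p n (t : trn) :
  parity_inv p t -> containsN0 n t -> exists a, n = Some (a, ~~ p).
Proof.
by elim: t => //= [X [a ->] <-|[s q] t IH [_ /IH]|s l IHl r IHr [/IHl Hl /IHr Hr] []]; eauto.
Qed.

Lemma Gn_normalized : normalized Gn.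
Proof.
split; first exact: Gn_normal_form.
move=> X t [_ [t1 [Hstep Hsteps]]].
have Ht1 : parity_inv (parity X) t1.
  inversion Hstep as [Y r _ Hr| | | |]; subst.
  by move: Hr => /In_Gn_prods0 [[[Y α] [s|]] _ [<- <-]].
have Ht : parity_inv (parity X) t.
  by elim: Hsteps Ht1 => // [x y /parity_inv_step1|x y z _ IH1 _ IH2]; auto.
move=> /(parity_inv_contains Ht) [a].
by case: X {Hstep Hsteps Ht1 Ht} => [[i []]|].
Qed.

Fixpoint denotes (t : trn) u : Prop :=
  match t with
  | tN0 X => derives G (nt_tree X) u
  | tS0 a => u = TLeaf (Some a)
  | tBox => u = TLeaf None
  | tN1 (s, _) t => exists w v, [/\ u = plug d w v, sym_words s w & denotes t v]
  | tS2 σ l r => exists ul ur, [/\ u = TBin σ ul ur, denotes l ul & denotes r ur]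
  end.

Lemma derivesn_denotes h (t : trn) u : derivesn Gn h t u -> denotes t u.
Proof.
elim: h t u => [|h IH] [X|a|[s p] t|σ l r|] u //=.
- move=> [_ /In_Gn_prods0 [[[Y α] [s'|]] Hsound [<- <-]] /IH] /=.
    by move=> [w [v [-> Hw ->]]]; exact: Hsound.
  by move->.
- move=> [_ /In_Gn_prods1 [[[s' p'] [[s1 s2]|[σ a]]] Hsound [<- _ <-]] /IH] /=.
    move=> [w1 [v1 [-> Hw1 [w2 [v2 [-> Hw2 Hv2]]]]]].
    by exists (w1 ++ w2), v2; rewrite plug_cat; split => //; exact: Hsound.
  case Eσ: (d σ) => /= -[ul [ur [-> Hl Hr]]].
  - by exists [:: (σ, ur)], ul; rewrite /= Eσ; split => //; exact: Hsound.
  - by exists [:: (σ, ul)], ur; rewrite /= Eσ; split => //; exact: Hsound.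
- by move=> [ul [ur [-> /IH Hl /IH Hr]]]; exists ul, ur.
Qed.

Lemma sym_words_factorizable s e w : sym_words (inl (s, e)) w ->
  factorizable G d grammar_tree (gtree s) e w.
Proof.
move=> [h Hh]; apply: derivesn_factorizable Hh; last exact: grammar_tree_gtree.
- exact: prods1_spine_context.
- exact: grammar_tree_N1.
- exact: grammar_tree_bin.
- exact: grammar_tree_N1_hole.
- exact: grammar_tree_prods0.
- exact: grammar_tree_prods1.
Qed.

Lemma sym_words_split s w : sym_words s w -> 1 < size w ->
  exists s1 s2 w1 w2, [/\ w = w1 ++ w2, w1 <> [::], w2 <> [::],
    sym_words s1 w1 /\ sym_words s2 w2 &
    forall w1' w2', sym_words s1 w1' -> sym_words s2 w2' -> sym_words s (w1' ++ w2')].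
Proof.
case: s => [[i e]|[σ i]]; last by move=> [v ->].
move=> /sym_words_factorizable [Hsplit _] /Hsplit.
move=> [k1 [k2 [w1 [w2 [-> Hw1 Hw2 [/symP [s1 Hs1] /symP [s2 Hs2] Hk1 Hk2] Hcat]]]]].
exists s1, s2, w1, w2; split=> //; first by split; [apply/Hs1|apply/Hs2].
by move=> w1' w2' /Hs1 Hw1' /Hs2 Hw2'; exact: Hcat.
Qed.

Lemma sym_words_letter s σ v : sym_words s [:: (σ, v)] -> exists a : Idx,
  derives G (gtree a) v /\ forall v', derives G (gtree a) v' -> sym_words s [:: (σ, v')].
Proof.
case: s => [[i e]|[σ' i]].
- move=> /sym_words_factorizable [_ /(_ σ v erefl)] [t [/gtreeP [a <-] Hv Hsub]].
  by exists a.
- by move=> [v0 [<- <-] Hv]; exists i; split => // v' Hv'; exists v'.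
Qed.

Lemma derives_Gn_N1 w s (p : bool) (t : trn) v :
  w <> [::] -> sym_words s w ->
  (forall σ x, In (σ, x) w -> forall X, derives G (nt_tree X) x -> derives Gn (tN0 X) x) ->
  derives Gn t v -> derives Gn (tN1 (s, p) t) (plug d w v).
Proof.
have [m] := ubnP (size w); elim: m w s t v => // m IH w s t v Hsize Hw0 Hw Hsides Hv.
case: w Hsize Hw0 Hw Hsides => [//|[σ x] [|a w]] Hsize _ Hw Hsides.
- have [a [Hxa Hsub]] := sym_words_letter Hw.
  have Hprod : In ((s, p), match d σ with
                           | D1 => tS2 σ tBox (tN0 (Some (a, ~~ p)))
                           | D2 => tS2 σ (tN0 (Some (a, ~~ p))) tBox
                           end) (prods1 Gn).
    by apply/In_Gn_prods1; exists ((s, p), inr (σ, a)).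
  have Hx : derives Gn (tN0 (Some (a, ~~ p))) x by apply: (Hsides σ); [left|].
  by move: Hprod; case Eσ: (d σ) => Hprod; apply: derives_prod1 Hprod _;
    rewrite /= Eσ; apply: derives_bin.
- have [s1 [s2 [w1 [w2 [Ew Hw1 Hw2 [Hs1 Hs2] Hcat]]]]] := sym_words_split Hw isT.
  have Hprod : In (prod1_of ((s, p), inl (s1, s2))) (prods1 Gn).
    by apply/In_Gn_prods1; exists ((s, p), inl (s1, s2)).
  have Hsize12 : size w1 + size w2 < m.+1 by rewrite -size_cat -Ew.
  have [Hpos1 Hpos2] : 0 < size w1 /\ 0 < size w2.
    by case: w1 w2 Hw1 Hw2 {Ew Hsize12 Hs1 Hs2} => [|? ?] [|? ?].
  rewrite Ew plug_cat; apply: derives_prod1 Hprod _; rewrite /=.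
  apply: (IH _ _ _ _ _ Hw1 Hs1); first lia.
    by move=> σ' x' Hx'; apply: (Hsides σ'); rewrite Ew; apply/in_app_iff; left.
  apply: (IH _ _ _ _ _ Hw2 Hs2 _ Hv); first lia.
  by move=> σ' x' Hx'; apply: (Hsides σ'); rewrite Ew; apply/in_app_iff; right.
Qed.

Lemma grammar_tree_nt_tree X : grammar_tree (nt_tree X).
Proof. by case: X => [[i p]|] /=; [exact: grammar_tree_gtree|exact: grammar_tree_start]. Qed.

Lemma derives_Gn_complete u X :
  hole_free u -> derives G (nt_tree X) u -> derives Gn (tN0 X) u.
Proof.
have [m] := ubnP (tsize u); elim: m u X => // m IH u X Hsize Hu HX.
have [w [e Eu]] := spine_decomposition d u; subst u.
have [He Hsides] := hole_free_plug Hu; clear Hu.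
case: e He HX Hsides Hsize => [α _|//] HX Hsides Hsize.
case: w HX Hsides Hsize => [|l w] HX Hsides Hsize.
- have Hprod : In (X, tS0 α) (prods0 Gn) by apply/In_Gn_prods0; exists (X, α, None).
  by apply: derives_prod0 Hprod _; exists 0.
- have [i Ei] := gtreeP (grammar_tree_nt_tree X).
  have Hprod : In (X, tN1 (inl (i, Some α), parity X) (tS0 α)) (prods0 Gn).
    by apply/In_Gn_prods0; exists (X, α, Some (inl (i, Some α))); rewrite //= /sym_words /= Ei.
  apply: derives_prod0 Hprod _; apply: derives_Gn_N1 => //.
  + by rewrite /sym_words /= Ei.
  + by move=> σ x /Hsides [Hx Hxsize] Y; apply: IH => //; lia.
  + by exists 0.
Qed.

Lemma lang_Gn (u : ttree S0 S2) : lang Gn u <-> lang G u.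
Proof.
rewrite !lang_derives; split=> [[h /derivesn_denotes] //|].
exact: (derives_Gn_complete (X := None) (hole_free_lift u)).
Qed.

End Normalization.

Theorem theorem4p5 (N0 N1 S0 S2 : finType) (G : sCFTG N0 N1 S0 S2)
    (d : S2 -> dir) :
  spine_grammar G d ->
  exists (N0' N1' : finType) (G' : sCFTG N0' N1' S0 S2) (d' : S2 -> dir),
    spine_grammar G' d' /\ normalized G' /\
    (forall u : ttree S0 S2, lang G' u <-> lang G u).
Proof.
move=> HG; exists _, _, (Gn G d), d.
by split; [exact: Gn_spine|split; [exact: Gn_normalized|exact: lang_Gn]].
Qed.
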